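(* Let $\Phi:[a,b]\to\mathbb{C}$ be continuous and nowhere zero, and let $X^{(n)}$, $\widetilde X^{(n)}$ ($n\ge 0$) be the $\Phi$-power functions defined below. Then for all $x_0,x\in[a,b]$: $$\widetilde X^{(n)}(x_0,x)=X^{(n)}(x,x_0)\quad\text{for } n \text{ even},$$ and $$\widetilde X^{(n)}(x_0,x)=-\widetilde X^{(n)}(x,x_0),\qquad X^{(n)}(x_0,x)=-X^{(n)}(x,x_0)\quad\text{for } n \text{ odd}.$$
   Context: For $x_0,x\in[a,b]$ the $\Phi$-power functions are defined recursively by $X^{(0)}(x_0,x)\equiv 1$, $\widetilde X^{(0)}(x_0,x)\equiv 1$ and, for $n\ge 1$, $$X^{(n)}(x_0,x)=n\int_{x_0}^x X^{(n-1)}(x_0,\xi)\,\big(\Phi(\xi)\big)^{(-1)^n}\,d\xi,\qquad \widetilde X^{(n)}(x_0,x)=n\int_{x_0}^x \widetilde X^{(n-1)}(x_0,\xi)\,\Big(\frac{1}{\Phi(\xi)}\Big)^{(-1)^n}\,d\xi.$$ *)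

From Stdlib Require Import Reals.
From Coquelicot Require Import Coquelicot.
Open Scope R_scope.

Fixpoint Xpow (Phi : R -> C) (n : nat) (x0 x : R) : C :=
  match n with
  | O => RtoC 1
  | S m =>
      Cmult (RtoC (INR (S m)))
        (@RInt C_R_CompleteNormedModule (fun xi : R =>
                 Cmult (Xpow Phi m x0 xi)
                   (if Nat.even (S m) then Phi xi else Cinv (Phi xi)))
              x0 x)
  end.

Definition Xtilde (Phi : R -> C) (n : nat) (x0 x : R) : C :=
  Xpow (fun xi => Cinv (Phi xi)) n x0 x.

Definition continuous_on_ab (a b : R) (Phi : R -> C) : Prop :=
  forall x, a <= x <= b ->
    filterlim Phi (within (fun y => a <= y <= b) (locally x)) (locally (Phi x)).

From Stdlib Require Import Reals Lra Lia Factorial.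
From Coquelicot Require Import Coquelicot.
Open Scope R_scope.

(* X^(n)(x0, x) / n! is the iterated integral, over x0 < xi_1 < ... < xi_n < x, of the
   alternating weights 1/Phi, Phi, 1/Phi, ..., and Xtilde^(n) / n! is the same with Phi and
   1/Phi exchanged.  Exchanging the endpoints of an iterated integral reverses the order of
   its weights and multiplies it by (-1)^n.  For n even the reversed weights of X^(n) are
   those of Xtilde^(n); for n odd both weight sequences are palindromes.  The reversal
   formula follows by induction from the recursion in the lower endpoint
   J_(n+1)(s, t) = int_s^t w_0(eta) J'_n(eta, t) d eta, which in turn follows from Chen's
   identity and the exchange of the order of integration over a triangle.  Since Phi is only
   continuous on [a, b], it is first extended to R by clamping. *)

Lemma continuous_Rplus (f g : R -> R) x :
  continuous f x -> continuous g x -> continuous (fun y => f y + g y) x.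
Proof. apply (continuous_plus (V := R_NormedModule)). Qed.

Lemma continuous_Rmult (f g : R -> R) x :
  continuous f x -> continuous g x -> continuous (fun y => f y * g y) x.
Proof. apply (continuous_mult (K := R_AbsRing)). Qed.

Lemma continuous_Rminus (f g : R -> R) x :
  continuous f x -> continuous g x -> continuous (fun y => f y - g y) x.
Proof. apply (continuous_minus (V := R_NormedModule)). Qed.

Lemma continuous_Ropp (f : R -> R) x :
  continuous f x -> continuous (fun y => - f y) x.
Proof. apply (continuous_opp (V := R_NormedModule)). Qed.

Lemma continuous_C_fst (f : R -> C) x :
  continuous f x -> continuous (fun y => fst (f y)) x.
Proof. intros Hf; apply continuous_comp; [exact Hf | apply continuous_fst]. Qed.

Lemma continuous_C_snd (f : R -> C) x :
  continuous f x -> continuous (fun y => snd (f y)) x.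
Proof. intros Hf; apply continuous_comp; [exact Hf | apply continuous_snd]. Qed.

Lemma continuous_C_components (f : R -> C) x :
  continuous (fun y => fst (f y)) x -> continuous (fun y => snd (f y)) x ->
  continuous f x.
Proof.
  intros H1 H2 P [eps HP].
  assert (Hball : locally x (fun y => ball (fst (f x)) eps (fst (f y))
                                   /\ ball (snd (f x)) eps (snd (f y)))).
  { apply filter_and; [apply H1 | apply H2]; apply locally_ball. }
  unfold filtermap; revert Hball; apply filter_imp; intros y [B1 B2]; now apply HP.
Qed.

Ltac continuous_R :=
  repeat match goal with
  | |- continuous (fun _ => ?c) _ => apply continuous_const
  | |- continuous (fun y => _ + _) _ => apply continuous_Rplus
  | |- continuous (fun y => _ - _) _ => apply continuous_Rminus
  | |- continuous (fun y => _ * _) _ => apply continuous_Rmult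
  | |- continuous (fun y => - _) _ => apply continuous_Ropp
  | |- continuous (fun y => fst _) _ => apply continuous_C_fst
  | |- continuous (fun y => snd _) _ => apply continuous_C_snd
  end.

Lemma continuous_Cmult (f g : R -> C) x :
  continuous f x -> continuous g x -> continuous (fun y => (f y * g y)%C) x.
Proof. intros Hf Hg; apply continuous_C_components; simpl; continuous_R; assumption. Qed.

Lemma continuous_Cinv (f : R -> C) x :
  continuous f x -> f x <> RtoC 0 -> continuous (fun y => (/ f y)%C) x.
Proof.
  intros Hf Hnz.
  set (N := fun y => fst (f y) ^ 2 + snd (f y) ^ 2).
  assert (HN : continuous N x) by (unfold N; simpl; continuous_R; assumption).
  assert (HN0 : N x <> 0).
  { unfold N; intro E; apply Hnz; destruct (f x) as [u v]; simpl in E.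
    assert (u = 0) by nra; assert (v = 0) by nra; subst; reflexivity. }
  apply continuous_C_components; simpl;
    apply continuous_Rmult; continuous_R; try assumption; now apply (continuous_Rinv_comp N).
Qed.

Lemma Cinv_neq_0 (z : C) : z <> RtoC 0 -> (/ z)%C <> RtoC 0.
Proof.
  intros Hz E; pose proof (Cinv_l z Hz) as H1.
  rewrite E, Cmult_0_l in H1; apply RtoC_inj in H1; lra.
Qed.

Lemma is_RInt_Cmult_l (f : R -> C) a b l c :
  is_RInt f a b l -> is_RInt (fun x => (c * f x)%C) a b (c * l)%C.
Proof.
  intros H.
  pose proof (is_RInt_fct_extend_fst _ _ _ _ H) as H1.
  pose proof (is_RInt_fct_extend_snd _ _ _ _ H) as H2.
  destruct c as [c1 c2]; destruct l as [l1 l2].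
  apply is_RInt_fct_extend_pair; simpl in *.
  - apply (is_RInt_minus (V := R_NormedModule)); now apply (is_RInt_scal (V := R_NormedModule)).
  - apply (is_RInt_plus (V := R_NormedModule)); now apply (is_RInt_scal (V := R_NormedModule)).
Qed.

Lemma is_RInt_C_eq (f g : R -> C) a b l l' :
  (forall x, f x = g x) -> l = l' -> is_RInt f a b l -> is_RInt g a b l'.
Proof. intros E <-; apply is_RInt_ext; intros; apply E. Qed.

Lemma ex_RInt_C_continuous (f : R -> C) a b :
  (forall x, continuous f x) -> ex_RInt (V := C_R_CompleteNormedModule) f a b.
Proof. intros Hf; apply ex_RInt_continuous; intros; apply Hf. Qed.

(* The integral occurring in [Xpow], under a name whose type is [C] itself, so that [ring]
   and [field] apply to equations between integrals. *)
Definition CInt (f : R -> C) (a b : R) : C := @RInt C_R_CompleteNormedModule f a b.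

Lemma is_RInt_CInt (f : R -> C) a b :
  (forall x, continuous f x) -> is_RInt f a b (CInt f a b).
Proof.
  intros Hf; apply (RInt_correct (V := C_R_CompleteNormedModule)), ex_RInt_C_continuous, Hf.
Qed.

Lemma CInt_ext_on (f g : R -> C) a b :
  (forall x, Rmin a b < x < Rmax a b -> f x = g x) -> CInt f a b = CInt g a b.
Proof. exact (RInt_ext (V := C_R_CompleteNormedModule) f g a b). Qed.

Lemma CInt_ext (f g : R -> C) a b : (forall x, f x = g x) -> CInt f a b = CInt g a b.
Proof. intros E; apply CInt_ext_on; intros; apply E. Qed.

Lemma CInt_mult_l (f : R -> C) a b c :
  (forall x, continuous f x) -> CInt (fun x => (c * f x)%C) a b = (c * CInt f a b)%C.
Proof.
  intros Hf; apply (is_RInt_unique (V := C_R_CompleteNormedModule)), is_RInt_Cmult_l.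
  now apply is_RInt_CInt.
Qed.

Lemma CInt_mult_r (f : R -> C) a b c :
  (forall x, continuous f x) -> CInt (fun x => (f x * c)%C) a b = (CInt f a b * c)%C.
Proof.
  intros Hf; rewrite Cmult_comm, <- CInt_mult_l by exact Hf.
  apply CInt_ext; intros; apply Cmult_comm.
Qed.

Lemma CInt_plus (f g : R -> C) a b :
  (forall x, continuous f x) -> (forall x, continuous g x) ->
  CInt (fun x => (f x + g x)%C) a b = (CInt f a b + CInt g a b)%C.
Proof.
  intros Hf Hg; unfold CInt; apply (RInt_plus (V := C_R_CompleteNormedModule));
    now apply ex_RInt_C_continuous.
Qed.

Lemma CInt_Chasles (f : R -> C) a b c :
  (forall x, continuous f x) -> (CInt f a b + CInt f b c)%C = CInt f a c.
Proof.
  intros Hf; unfold CInt; apply (RInt_Chasles (V := C_R_CompleteNormedModule));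
    now apply ex_RInt_C_continuous.
Qed.

Lemma CInt_swap (f : R -> C) a b :
  (forall x, continuous f x) -> CInt f b a = (- CInt f a b)%C.
Proof.
  intros Hf; symmetry; unfold CInt; apply (opp_RInt_swap (V := C_R_CompleteNormedModule)).
  now apply ex_RInt_C_continuous.
Qed.

Lemma CInt_opp (f : R -> C) a b :
  (forall x, continuous f x) -> CInt (fun x => (- f x)%C) a b = (- CInt f a b)%C.
Proof.
  intros Hf; unfold CInt; apply (RInt_opp (V := C_R_CompleteNormedModule)).
  now apply ex_RInt_C_continuous.
Qed.

Lemma CInt_point (f : R -> C) a : CInt f a a = RtoC 0.
Proof. exact (RInt_point (V := C_R_CompleteNormedModule) a f). Qed.

Lemma continuous_C_sum_n (f : nat -> R -> C) n x :
  (forall k, (k <= n)%nat -> continuous (f k) x) ->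
  continuous (fun y => sum_n (fun k => f k y) n) x.
Proof.
  induction n as [|n IH]; intros Hf.
  - apply (continuous_ext (f 0%nat)); [intros; now rewrite sum_O | apply Hf; lia].
  - apply (continuous_ext (fun y => (sum_n (fun k => f k y) n + f (S n) y)%C)).
    + intros; now rewrite sum_Sn.
    + apply (continuous_plus (V := C_R_NormedModule)); [apply IH; intros |]; apply Hf; lia.
Qed.

Lemma CInt_sum_n (f : nat -> R -> C) n a b :
  (forall k x, (k <= n)%nat -> continuous (f k) x) ->
  CInt (fun x => sum_n (fun k => f k x) n) a b = sum_n (fun k => CInt (f k) a b) n.
Proof.
  induction n as [|n IH]; intros Hf.
  - rewrite sum_O; apply CInt_ext; intros; now rewrite sum_O.
  - rewrite sum_Sn, <- IH by (intros; apply Hf; lia).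
    rewrite <- CInt_plus.
    + apply CInt_ext; intros; now rewrite sum_Sn.
    + intros; apply continuous_C_sum_n; intros; apply Hf; lia.
    + intros; apply Hf; lia.
Qed.

Lemma is_derive_CInt (f : R -> C) s x :
  (forall y, continuous f y) -> is_derive (fun y => CInt f s y) x (f x).
Proof.
  intros Hf; apply (is_derive_RInt f _ s x); [| apply Hf].
  apply filter_forall; intros y; now apply is_RInt_CInt.
Qed.

Lemma continuous_CInt_upper (f : R -> C) s x :
  (forall y, continuous f y) -> continuous (fun y => CInt f s y) x.
Proof.
  intros Hf; apply (continuous_RInt_1 f s x).
  apply filter_forall; intros y; now apply is_RInt_CInt.
Qed.

Lemma continuous_CInt_lower (f : R -> C) t x :
  (forall y, continuous f y) -> continuous (fun y => CInt f y t) x.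
Proof.
  intros Hf.
  apply (continuous_ext (fun y => Copp (CInt f t y))).
  - intros y; now rewrite (CInt_swap f t y Hf).
  - apply (continuous_opp (V := C_R_NormedModule)), continuous_CInt_upper, Hf.
Qed.

Lemma is_derive_fst_CInt (f : R -> C) s x :
  (forall y, continuous f y) -> is_derive (fun y => fst (CInt f s y)) x (fst (f x)).
Proof.
  intros Hf; apply (is_derive_RInt (fun y => fst (f y)) _ s x).
  - apply filter_forall; intros y; apply is_RInt_fct_extend_fst, is_RInt_CInt, Hf.
  - now apply continuous_C_fst.
Qed.

Lemma is_derive_snd_CInt (f : R -> C) s x :
  (forall y, continuous f y) -> is_derive (fun y => snd (CInt f s y)) x (snd (f x)).
Proof.
  intros Hf; apply (is_derive_RInt (fun y => snd (f y)) _ s x).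
  - apply filter_forall; intros y; apply is_RInt_fct_extend_snd, is_RInt_CInt, Hf.
  - now apply continuous_C_snd.
Qed.

Ltac generalize_CInt :=
  repeat match goal with
  | |- context [CInt ?f ?a ?b] =>
      let z := fresh "z" in set (z := CInt f a b) in *; clearbody z
  end.

Ltac C_ring :=
  cbv beta; generalize_CInt; apply injective_projections;
  repeat progress (simpl; unfold scal, plus, minus, opp, zero, mult,
                   prod_scal, prod_plus, prod_opp, prod_zero, Cmult, Cplus, Copp, RtoC, Ci);
  ring.

(* Writing G = CInt g s = G1 + i G2 with G1, G2 real and H = CInt h s, the integrand is
   G1 h + g1 H + G2 (i h) + g2 (i H): two instances of Coquelicot's product rule for a real
   and a complex factor. *)
Lemma CInt_product_primitives (g h : R -> C) s t :
  (forall x, continuous g x) -> (forall x, continuous h x) ->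
  CInt (fun x => (CInt g s x * h x + g x * CInt h s x)%C) s t = (CInt g s t * CInt h s t)%C.
Proof.
  intros Hg Hh; apply (is_RInt_unique (V := C_R_CompleteNormedModule)).
  assert (Hg1 : forall x, continuous (fun y => fst (g y)) x)
    by (intros; now apply continuous_C_fst).
  assert (Hg2 : forall x, continuous (fun y => snd (g y)) x)
    by (intros; now apply continuous_C_snd).
  assert (Hih : forall x, continuous (fun y => (Ci * h y)%C) x)
    by (intros; apply continuous_Cmult; [apply continuous_const | apply Hh]).
  assert (DiH : forall x, is_derive (fun y => (Ci * CInt h s y)%C) x (Ci * h x)%C).
  { intros x; apply (is_derive_ext (fun y => CInt (fun z => (Ci * h z)%C) s y)).
    - intros y; now apply CInt_mult_l.
    - now apply is_derive_CInt. }
  pose proof (is_RInt_scal_derive (V := C_R_CompleteNormedModule)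
    (fun y => fst (CInt g s y)) (fun y => CInt h s y) (fun y => fst (g y)) h s t
    (fun x _ => is_derive_fst_CInt g s x Hg) (fun x _ => is_derive_CInt h s x Hh)
    (fun x _ => Hg1 x) (fun x _ => Hh x)) as Hre.
  pose proof (is_RInt_scal_derive (V := C_R_CompleteNormedModule)
    (fun y => snd (CInt g s y)) (fun y => (Ci * CInt h s y)%C)
    (fun y => snd (g y)) (fun y => (Ci * h y)%C) s t
    (fun x _ => is_derive_snd_CInt g s x Hg) (fun x _ => DiH x)
    (fun x _ => Hg2 x) (fun x _ => Hih x)) as Him.
  pose proof (is_RInt_plus _ _ s t _ _ Hre Him) as Hsum.
  rewrite !CInt_point in Hsum.
  revert Hsum; apply is_RInt_C_eq; [intros x |]; C_ring.
Qed.

Lemma CInt_triangle_swap (g h : R -> C) s t :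
  (forall x, continuous g x) -> (forall x, continuous h x) ->
  CInt (fun x => (CInt g s x * h x)%C) s t = CInt (fun y => (g y * CInt h y t)%C) s t.
Proof.
  intros Hg Hh.
  assert (Hgh : forall x, continuous (fun y => (g y * CInt h s y)%C) x)
    by (intros; apply continuous_Cmult; [apply Hg | now apply continuous_CInt_upper]).
  pose proof (CInt_product_primitives g h s t Hg Hh) as Hprod.
  rewrite CInt_plus in Hprod;
    [| intros; apply continuous_Cmult; [now apply continuous_CInt_upper | apply Hh] | apply Hgh].
  rewrite (CInt_ext (fun y => (g y * CInt h y t)%C)
             (fun y => (g y * CInt h s t + - (g y * CInt h s y))%C)).
  2: { intros y; rewrite <- (CInt_Chasles h s y t Hh); ring. }
  rewrite CInt_plus, CInt_mult_r, <- Hprod.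
  - rewrite CInt_opp by exact Hgh; ring.
  - exact Hg.
  - intros; apply continuous_Cmult; [apply Hg | apply continuous_const].
  - intros; apply (continuous_opp (V := C_R_NormedModule)), Hgh.
Qed.

Lemma sum_n_Cmult_r (u : nat -> C) a n : sum_n (fun k => (u k * a)%C) n = (sum_n u n * a)%C.
Proof. exact (sum_n_mult_r (K := C_Ring) a u n). Qed.

Lemma sum_n_Cmult_l (u : nat -> C) a n : sum_n (fun k => (a * u k)%C) n = (a * sum_n u n)%C.
Proof. exact (sum_n_mult_l (K := C_Ring) a u n). Qed.

Lemma sum_n_C_ext (u v : nat -> C) n :
  (forall k, (k <= n)%nat -> u k = v k) -> sum_n u n = sum_n v n.
Proof. exact (sum_n_ext_loc u v n). Qed.

Lemma sum_n_C_Sn (u : nat -> C) n : sum_n u (S n) = (sum_n u n + u (S n))%C.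
Proof. exact (sum_Sn u n). Qed.

Definition weights_continuous (w : nat -> R -> C) : Prop := forall i x, continuous (w i) x.

Fixpoint iter_int (w : nat -> R -> C) (n : nat) (s t : R) : C :=
  match n with
  | O => RtoC 1
  | S m => CInt (fun xi => (iter_int w m s xi * w m xi)%C) s t
  end.

Definition shift (k : nat) (w : nat -> R -> C) : nat -> R -> C := fun i => w (k + i)%nat.

Lemma weights_continuous_shift k w : weights_continuous w -> weights_continuous (shift k w).
Proof. intros Hw i; apply Hw. Qed.

Lemma continuous_iter_int_upper w n s t :
  weights_continuous w -> continuous (iter_int w n s) t.
Proof.
  intros Hw; revert t; induction n as [|n IH]; intros t.
  - apply continuous_const.
  - apply continuous_CInt_upper; intros; apply continuous_Cmult; [apply IH | apply Hw].
Qed.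

Lemma continuous_iter_int_weight v w j m s x :
  weights_continuous v -> weights_continuous w ->
  continuous (fun xi => (iter_int v j s xi * w m xi)%C) x.
Proof. intros Hv Hw; apply continuous_Cmult; [now apply continuous_iter_int_upper | apply Hw]. Qed.

Lemma iter_int_ext w w' n s t :
  (forall i x, (i < n)%nat -> w i x = w' i x) -> iter_int w n s t = iter_int w' n s t.
Proof.
  revert t; induction n as [|n IH]; intros t Hww'; [reflexivity |].
  apply CInt_ext; intros x; rewrite IH, Hww'; [reflexivity | lia |].
  intros; apply Hww'; lia.
Qed.

Lemma iter_int_Chen w n s y t :
  weights_continuous w ->
  iter_int w n s t = sum_n (fun k => (iter_int w k s y * iter_int (shift k w) (n - k) y t)%C) n.
Proof.
  intros Hw; revert t; induction n as [|n IH]; intros t.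
  - rewrite sum_O; simpl; ring.
  - assert (Hint : forall x, continuous (fun xi => (iter_int w n s xi * w n xi)%C) x)
      by (intros; now apply continuous_iter_int_weight).
    rewrite sum_n_C_Sn, Nat.sub_diag; simpl (iter_int _ 0 _ _); rewrite Cmult_1_r.
    change (iter_int w (S n) s t) with (CInt (fun xi => (iter_int w n s xi * w n xi)%C) s t).
    rewrite <- (CInt_Chasles (fun xi => (iter_int w n s xi * w n xi)%C) s y t Hint).
    rewrite Cplus_comm; f_equal.
    rewrite (CInt_ext _ (fun xi => sum_n (fun k =>
               (iter_int w k s y * (iter_int (shift k w) (n - k) y xi * w n xi))%C) n)).
    2: { intros xi; rewrite IH, <- sum_n_Cmult_r; apply sum_n_C_ext; intros; ring. }
    rewrite CInt_sum_n.
    2: { intros k x _; apply continuous_Cmult; [apply continuous_const |].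
         apply continuous_iter_int_weight; auto using weights_continuous_shift. }
    apply sum_n_C_ext; intros k Hk.
    rewrite CInt_mult_l; [f_equal |].
    + replace (S n - k)%nat with (S (n - k)) by lia; simpl.
      apply CInt_ext; intros xi; unfold shift; do 2 f_equal; lia.
    + intros; apply continuous_iter_int_weight; auto using weights_continuous_shift.
Qed.

Lemma iter_int_S_split w m s eta t :
  weights_continuous w ->
  iter_int w (S m) eta t =
  sum_n (fun k => (iter_int w k eta s
                   * CInt (fun xi => (iter_int (shift k w) (m - k) s xi * w m xi)%C) eta t)%C) m.
Proof.
  intros Hw; simpl.
  rewrite (CInt_ext _ (fun xi => sum_n (fun k =>
             (iter_int w k eta s * (iter_int (shift k w) (m - k) s xi * w m xi))%C) m)).
  2: { intros xi; rewrite (iter_int_Chen w m eta s xi Hw), <- sum_n_Cmult_r.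
       apply sum_n_C_ext; intros; ring. }
  rewrite CInt_sum_n.
  - apply sum_n_C_ext; intros k _; apply CInt_mult_l; intros.
    apply continuous_iter_int_weight; auto using weights_continuous_shift.
  - intros k x _; apply continuous_Cmult; [apply continuous_const |].
    apply continuous_iter_int_weight; auto using weights_continuous_shift.
Qed.

(* The recursion in the lower endpoint and the continuity in the lower endpoint are proved
   together, by strong induction on the order. *)
Definition first_variable_recursion (m : nat) : Prop :=
  forall w, weights_continuous w -> forall s t,
  iter_int w (S m) s t = CInt (fun eta => (w 0%nat eta * iter_int (shift 1 w) m eta t)%C) s t.

Definition lower_continuity (n : nat) : Prop :=
  forall w, weights_continuous w -> forall t x, continuous (fun eta => iter_int w n eta t) x.

Lemma lower_continuity_of_recursion n :
  (forall j, (j < n)%nat -> first_variable_recursion j) -> lower_continuity n.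
Proof.
  induction n as [|n IH]; intros HF w Hw t x.
  - apply continuous_const.
  - apply (continuous_ext (fun eta =>
             CInt (fun xi => (w 0%nat xi * iter_int (shift 1 w) n xi t)%C) eta t)).
    + intros eta; symmetry; apply HF; [lia | exact Hw].
    + apply continuous_CInt_lower; intros y; apply continuous_Cmult; [apply Hw |].
      apply IH; [intros; apply HF; lia | apply weights_continuous_shift, Hw].
Qed.

Lemma first_variable_recursion_0 : first_variable_recursion 0.
Proof. intros w _ s t; apply CInt_ext; intros; simpl; ring. Qed.

Lemma first_variable_recursion_S m :
  first_variable_recursion m -> (forall k, (k <= m)%nat -> lower_continuity k) ->
  first_variable_recursion (S m).
Proof.
  intros HF HC w Hw s t.
  set (w1 := shift 1 w).
  assert (Hw1 : weights_continuous w1) by now apply weights_continuous_shift.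
  set (g := fun k eta => (w 0%nat eta * iter_int w1 k eta s)%C).
  set (h := fun k xi => (iter_int (shift k w1) (m - k) s xi * w1 m xi)%C).
  assert (Hg : forall k x, (k <= m)%nat -> continuous (g k) x)
    by (intros k x Hk; apply continuous_Cmult; [apply Hw | now apply HC]).
  assert (Hh : forall k x, continuous (h k) x).
  { intros k x; apply continuous_iter_int_weight; auto using weights_continuous_shift. }
  transitivity (sum_n (fun k => CInt (fun eta => (g k eta * CInt (h k) eta t)%C) s t) m).
  - change (iter_int w (S (S m)) s t)
      with (CInt (fun xi => (iter_int w (S m) s xi * w1 m xi)%C) s t).
    rewrite (CInt_ext _ (fun xi => sum_n (fun k => (CInt (g k) s xi * h k xi)%C) m)).
    + rewrite CInt_sum_n.
      * apply sum_n_C_ext; intros k Hk; apply CInt_triangle_swap; auto.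
      * intros k x Hk; apply continuous_Cmult; [apply continuous_CInt_upper |]; auto.
    + intros xi; rewrite (HF w Hw s xi); fold w1.
      rewrite (CInt_ext _ (fun eta =>
                 sum_n (fun k => (g k eta * iter_int (shift k w1) (m - k) s xi)%C) m)).
      * rewrite CInt_sum_n, <- sum_n_Cmult_r;
          [| intros; apply continuous_Cmult; auto using continuous_const].
        apply sum_n_C_ext; intros k Hk; unfold h.
        rewrite CInt_mult_r by auto; ring.
      * intros eta; rewrite (iter_int_Chen w1 m eta s xi Hw1), <- sum_n_Cmult_l.
        apply sum_n_C_ext; intros; unfold g; ring.
  - rewrite <- CInt_sum_n.
    + apply CInt_ext; intros eta.
      rewrite (iter_int_S_split w1 m s eta t Hw1), <- sum_n_Cmult_l.
      apply sum_n_C_ext; intros k Hk; unfold g, h; ring.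
    + intros k x Hk; apply continuous_Cmult; [auto | now apply continuous_CInt_lower].
Qed.

Lemma first_variable_recursion_all m : first_variable_recursion m.
Proof.
  enough (H : forall j, (j <= m)%nat -> first_variable_recursion j) by (apply H; lia).
  induction m as [|m IH]; intros j Hj.
  - replace j with 0%nat by lia; apply first_variable_recursion_0.
  - destruct (Nat.le_gt_cases j m) as [Hjm | Hjm]; [now apply IH |].
    replace j with (S m) by lia.
    apply first_variable_recursion_S; [now apply IH |].
    intros k Hk; apply lower_continuity_of_recursion; intros; apply IH; lia.
Qed.

Lemma iter_int_S_first w m s t :
  weights_continuous w ->
  iter_int w (S m) s t = CInt (fun eta => (w 0%nat eta * iter_int (shift 1 w) m eta t)%C) s t.
Proof. intros Hw; now apply (first_variable_recursion_all m w). Qed.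

Lemma continuous_iter_int_lower w n t x :
  weights_continuous w -> continuous (fun eta => iter_int w n eta t) x.
Proof.
  intros Hw; apply (lower_continuity_of_recursion n); [| exact Hw].
  intros; apply first_variable_recursion_all.
Qed.

(* Truncated subtraction is harmless: [iter_int w n] only uses the weights [w i] with i < n. *)
Definition rev_weights (n : nat) (w : nat -> R -> C) : nat -> R -> C :=
  fun i => w (n - 1 - i)%nat.

Lemma weights_continuous_rev n w : weights_continuous w -> weights_continuous (rev_weights n w).
Proof. intros Hw i; apply Hw. Qed.

Lemma iter_int_reverse n w s t :
  weights_continuous w ->
  iter_int w n s t = (RtoC ((-1) ^ n) * iter_int (rev_weights n w) n t s)%C.
Proof.
  intros Hw; revert t; induction n as [|n IH]; intros t; [simpl; ring |].
  assert (Hrev : weights_continuous (rev_weights n w)) by now apply weights_continuous_rev.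
  change (iter_int w (S n) s t) with (CInt (fun xi => (iter_int w n s xi * w n xi)%C) s t).
  rewrite (CInt_ext _ (fun xi =>
             (RtoC ((-1) ^ n) * (iter_int (rev_weights n w) n xi s * w n xi))%C)).
  2: { intros xi; rewrite IH; ring. }
  rewrite CInt_mult_l.
  2: { intros; apply continuous_Cmult; [now apply continuous_iter_int_lower | apply Hw]. }
  rewrite (iter_int_S_first (rev_weights (S n) w)) by now apply weights_continuous_rev.
  rewrite (CInt_swap _ s t).
  2: { intros; apply continuous_Cmult; [apply Hw |].
       apply continuous_iter_int_lower, weights_continuous_shift, weights_continuous_rev, Hw. }
  rewrite (CInt_ext (fun xi => (rev_weights (S n) w 0%nat xi
                                    * iter_int (shift 1 (rev_weights (S n) w)) n xi s)%C)
                      (fun xi => (iter_int (rev_weights n w) n xi s * w n xi)%C)).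
  - replace ((-1) ^ S n) with (- (-1) ^ n) by (simpl; ring).
    rewrite RtoC_opp; ring.
  - intros xi; rewrite Cmult_comm; f_equal.
    + apply iter_int_ext; intros i x Hi; unfold shift, rev_weights; f_equal; lia.
    + unfold rev_weights; f_equal; lia.
Qed.

Definition phi_weights (Psi : R -> C) : nat -> R -> C :=
  fun i x => if Nat.even (S i) then Psi x else (/ Psi x)%C.

Lemma weights_continuous_phi_weights Psi :
  (forall x, continuous Psi x) -> (forall x, Psi x <> RtoC 0) ->
  weights_continuous (phi_weights Psi).
Proof.
  intros Hc Hnz i x; unfold phi_weights.
  destruct (Nat.even (S i)); [apply Hc | now apply continuous_Cinv].
Qed.

Lemma even_S_sub n i :
  (i < n)%nat -> Nat.even (S (n - 1 - i)) = Bool.eqb (Nat.even n) (Nat.even i).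
Proof. intros Hi; replace (S (n - 1 - i)) with (n - i)%nat by lia; apply Nat.even_sub; lia. Qed.

Lemma iter_int_phi_weights_even Psi n s t :
  (forall x, continuous Psi x) -> (forall x, Psi x <> RtoC 0) -> Nat.even n = true ->
  iter_int (phi_weights (fun x => / Psi x)%C) n s t = iter_int (phi_weights Psi) n t s.
Proof.
  intros Hc Hnz Hn.
  rewrite (iter_int_reverse n (phi_weights Psi)) by now apply weights_continuous_phi_weights.
  apply Nat.even_spec in Hn as [k ->]; rewrite pow_1_even, Cmult_1_l.
  apply iter_int_ext; intros i x Hi; unfold rev_weights, phi_weights.
  rewrite even_S_sub, Nat.even_mul, Nat.even_succ, <- Nat.negb_even by exact Hi.
  destruct (Nat.even i); simpl; [field |]; easy.
Qed.

Lemma iter_int_phi_weights_odd Psi n s t :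
  (forall x, continuous Psi x) -> (forall x, Psi x <> RtoC 0) -> Nat.odd n = true ->
  iter_int (phi_weights Psi) n s t = (- iter_int (phi_weights Psi) n t s)%C.
Proof.
  intros Hc Hnz Hn.
  rewrite (iter_int_reverse n (phi_weights Psi) t s) by now apply weights_continuous_phi_weights.
  apply Nat.odd_spec in Hn as [k ->]; rewrite Nat.add_1_r, pow_1_odd.
  change (-1) with (- (1)); rewrite RtoC_opp.
  rewrite (iter_int_ext (rev_weights (S (2 * k)) (phi_weights Psi)) (phi_weights Psi)); [ring |].
  intros i x Hi; unfold rev_weights, phi_weights.
  rewrite even_S_sub, !Nat.even_succ, Nat.odd_mul by exact Hi; unfold Nat.odd; simpl.
  now destruct (Nat.even i).
Qed.

Definition clamp (a b x : R) : R := Rmax a (Rmin b x).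

Lemma clamp_in a b x : a <= b -> a <= clamp a b x <= b.
Proof. intros Hab; unfold clamp, Rmax, Rmin; repeat destruct Rle_dec; lra. Qed.

Lemma clamp_id a b x : a <= x <= b -> clamp a b x = x.
Proof. intros Hx; unfold clamp, Rmax, Rmin; repeat destruct Rle_dec; lra. Qed.

Lemma clamp_lipschitz a b x y : Rabs (clamp a b y - clamp a b x) <= Rabs (y - x).
Proof.
  unfold clamp, Rmax, Rmin; repeat destruct Rle_dec;
    unfold Rabs; repeat destruct Rcase_abs; lra.
Qed.

Lemma continuous_clamp a b x : continuous (clamp a b) x.
Proof.
  apply filterlim_locally; intros eps; exists eps; intros y Hy.
  apply Rle_lt_trans with (1 := clamp_lipschitz a b x y), Hy.
Qed.

Lemma continuous_on_ab_clamp a b Phi :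
  a <= b -> continuous_on_ab a b Phi -> forall x, continuous (fun y => Phi (clamp a b y)) x.
Proof.
  intros Hab Hc x P HP.
  pose proof (continuous_clamp a b x _ (Hc (clamp a b x) (clamp_in a b x Hab) P HP)) as Hcl.
  unfold filtermap, within in Hcl |- *.
  revert Hcl; apply filter_imp; intros y Hy; apply Hy, clamp_in, Hab.
Qed.

Lemma Xpow_iter_int Psi a b n s t :
  weights_continuous (phi_weights (fun x => Psi (clamp a b x))) ->
  a <= s <= b -> a <= t <= b ->
  Xpow Psi n s t =
  (RtoC (INR (fact n)) * iter_int (phi_weights (fun x => Psi (clamp a b x))) n s t)%C.
Proof.
  set (w := phi_weights (fun x => Psi (clamp a b x))).
  intros Hw Hs; revert t; induction n as [|n IH]; intros t Ht; [simpl; ring |].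
  cbn [Xpow iter_int]; change (RInt ?f s t) with (CInt f s t).
  rewrite (CInt_ext_on _ (fun xi => (RtoC (INR (fact n)) * (iter_int w n s xi * w n xi))%C)).
  - rewrite CInt_mult_l, fact_simpl, mult_INR, RtoC_mult; [ring |].
    intros; now apply continuous_iter_int_weight.
  - intros xi Hxi.
    assert (Hxi' : a <= xi <= b) by (revert Hxi; unfold Rmin, Rmax; destruct Rle_dec; lra).
    rewrite IH by exact Hxi'; unfold w, phi_weights; rewrite clamp_id by exact Hxi'; ring.
Qed.

Theorem theorem2 (a b : R) (Phi : R -> C)
  (Hcont : continuous_on_ab a b Phi)
  (Hnz : forall x, a <= x <= b -> Phi x <> RtoC 0) :
  forall (n : nat) (x0 x : R), a <= x0 <= b -> a <= x <= b ->
    (Nat.even n = true -> Xtilde Phi n x0 x = Xpow Phi n x x0) /\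
    (Nat.odd n = true ->
       Xtilde Phi n x0 x = Copp (Xtilde Phi n x x0) /\
       Xpow Phi n x0 x = Copp (Xpow Phi n x x0)).
Proof.
  intros n x0 x Hx0 Hx.
  assert (Hab : a <= b) by lra.
  set (Phi0 := fun y => Phi (clamp a b y)).
  set (Phi0inv := fun y : R => (/ Phi0 y)%C).
  assert (Hc : forall y, continuous Phi0 y) by now apply continuous_on_ab_clamp.
  assert (Hnz0 : forall y, Phi0 y <> RtoC 0) by (intros; apply Hnz, clamp_in, Hab).
  assert (Hcinv : forall y, continuous Phi0inv y) by (intros; now apply continuous_Cinv).
  assert (Hnzinv : forall y, Phi0inv y <> RtoC 0) by (intros; now apply Cinv_neq_0).
  assert (HX : forall s t, a <= s <= b -> a <= t <= b ->
            Xpow Phi n s t = (RtoC (INR (fact n)) * iter_int (phi_weights Phi0) n s t)%C)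
    by (intros; apply Xpow_iter_int; auto using weights_continuous_phi_weights).
  assert (HXt : forall s t, a <= s <= b -> a <= t <= b ->
            Xtilde Phi n s t = (RtoC (INR (fact n)) * iter_int (phi_weights Phi0inv) n s t)%C)
    by (intros; apply (Xpow_iter_int (fun y => / Phi y)%C);
        auto using weights_continuous_phi_weights).
  split.
  - intros Hn; rewrite HXt, HX by assumption; unfold Phi0inv.
    now rewrite iter_int_phi_weights_even.
  - intros Hn; rewrite !HXt, !HX by assumption.
    rewrite (iter_int_phi_weights_odd Phi0 n x0 x), (iter_int_phi_weights_odd Phi0inv n x0 x)
      by assumption.
    split; ring.
Qed.
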